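(* Let the language contain a constant and let $t_1,t_2,\dots$ be a fixed enumeration of all closed terms. Let $E$ be a sentence containing only weak quantifier occurrences. Then $\models_1 E$ iff some expansion $E_n$ of $E$ is valid, i.e. $\models_1 E_n$ (a Herbrand expansion).
   Context: The propositional setting is as follows. - A lattice-oriented signature $\mathcal{L}$ is a finite set of connectives. Each connective $c$ has an arity $n_c$ and a polarity $p_c:\{1,\dots,n_c\}\to\{-,+\}$. It includes binary $\lor,\land,\to$ with $p_\lor\equiv p_\land\equiv +$, $p_\to(1)=-$ and $p_\to(2)=+$. - A finite $\mathcal{L}$-lattice $\mathbf{A}$ is a finite set $L$ with operations $c^L$ such that $(L,\lor^L,\land^L)$ is a lattice with order $\le$ and top $1$. Each $c^L$ is monotone in the arguments with polarity $+$ and antitone in those with polarity $-$. Moreover $1\le a\to b$ iff $a\le b$. The first-order setting is as follows. - Fix a finite $\mathcal{L}$-lattice $\mathbf{A}$ and a predicate language with predicate and function symbols of given arities. - Terms and formulas are built as usual from object variables using the connectives of $\mathcal{L}$ and the quantifiers $\forall,\exists$. - A structure consists of a nonempty set $S$, maps $P^S:S^n\to L$ for the $n$-ary predicate symbols, and maps $f^S:S^n\to S$ for the $n$-ary function symbols. - An evaluation $v$ maps variables to $S$. Formulas get values in $L$: connectives are interpreted by $c^L$; $\|\forall x\varphi\|_v=\bigwedge_{a\in S}\|\varphi\|_{v[x\to a]}$ and $\|\exists x\varphi\|_v=\bigvee_{a\in S}\|\varphi\|_{v[x\to a]}$. - $\models_1 C$ means $\|C\|_v=1$ for every structure and every evaluation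 $v$. - An occurrence in a formula is positive or negative: the whole formula is positive, and going into argument $i$ of a connective $c$ keeps the polarity if $p_c(i)=+$ and flips it if $p_c(i)=-$. Quantifiers do not change polarity. - Weak quantifier occurrences are positive occurrences of $\exists$ and negative occurrences of $\forall$; strong ones are positive $\forall$ and negative $\exists$. - The $n$-th expansion $E_n$ of $E$ is obtained by replacing, from the inside out, every subformula $\exists xA(x)$ by $\bigvee_{i=1}^nA(t_i)$ and every subformula $\forall xA(x)$ by $\bigwedge_{i=1}^nA(t_i)$. *)

From HB Require Import structures.
From mathcomp Require Import all_boot.
From Stdlib Require Import ClassicalEpsilon.
Set Implicit Arguments. Unset Strict Implicit. Unset Printing Implicit Defensive.

(* Lattice-oriented signature.  The binary connectives \/, /\, -> are   *)
(* built in (constructors FOr, FAnd, FImp below, with polarities        *)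
(* (+,+), (+,+), (-,+)); [xconn] is the finite set of the remaining     *)
(* connectives, each with an arity and a polarity (true = +, false = -).*)
(* Arguments are indexed 0..n-1 instead of 1..n.                        *)
Record signature := Signature {
  xconn : finType;
  xarity : xconn -> nat;
  xpol : forall c : xconn, 'I_(xarity c) -> bool }.

Record Llattice (Sg : signature) := LLattice {
  car : finType;
  le : rel car;
  ljoin : car -> car -> car;
  lmeet : car -> car -> car;
  limp : car -> car -> car;
  ltop : car;
  lxop : forall c : xconn Sg, ('I_(xarity c) -> car) -> car;
  le_refl : forall a, le a a;
  le_trans : forall a b c, le a b -> le b c -> le a c;
  le_anti : forall a b, le a b -> le b a -> a = b;
  ljoin_ubl : forall a b, le a (ljoin a b);
  ljoin_ubr : forall a b, le b (ljoin a b);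
  ljoin_lub : forall a b c, le a c -> le b c -> le (ljoin a b) c;
  lmeet_lbl : forall a b, le (lmeet a b) a;
  lmeet_lbr : forall a b, le (lmeet a b) b;
  lmeet_glb : forall a b c, le c a -> le c b -> le c (lmeet a b);
  ltop_max : forall a, le a ltop;
  limp_mono : forall a a' b b', le a' a -> le b b' -> le (limp a b) (limp a' b');
  limp_top : forall a b, le ltop (limp a b) <-> le a b;
  lxop_mono : forall (c : xconn Sg) (f g : 'I_(xarity c) -> car),
      (forall i, if xpol i then le (f i) (g i) else le (g i) (f i)) ->
      le (lxop f) (lxop g) }.

Arguments le {Sg A} : rename.
Arguments ljoin {Sg A} : rename.
Arguments lmeet {Sg A} : rename.
Arguments limp {Sg A} : rename.
Arguments ltop {Sg A} : rename.
Arguments lxop {Sg A c} : rename.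

Record language := Language {
  psymb : Type; parity : psymb -> nat;
  fsymb : Type; farity : fsymb -> nat }.

Inductive term (La : language) : Type :=
| TVar of nat
| TFun (f : fsymb La) of ('I_(farity f) -> term La).

Inductive formula (Sg : signature) (La : language) : Type :=
| FAtom (P : psymb La) of ('I_(parity P) -> term La)
| FOr of formula Sg La & formula Sg La
| FAnd of formula Sg La & formula Sg La
| FImp of formula Sg La & formula Sg La
| FX (c : xconn Sg) of ('I_(xarity c) -> formula Sg La)
| FAll of nat & formula Sg La
| FEx of nat & formula Sg La.

Arguments TVar {La}.
Arguments TFun {La}.
Arguments FAtom {Sg La}.
Arguments FOr {Sg La}.
Arguments FAnd {Sg La}.
Arguments FImp {Sg La}.
Arguments FX {Sg La}.
Arguments FAll {Sg La}.
Arguments FEx {Sg La}.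

Record structure (Sg : signature) (La : language) (A : Llattice Sg) := Structure {
  dom : Type;
  dom_pt : dom;                      (* the domain is nonempty *)
  pint : forall P : psymb La, ('I_(parity P) -> dom) -> car A;
  fint : forall f : fsymb La, ('I_(farity f) -> dom) -> dom }.

Arguments dom {Sg La A} M : rename.
Arguments dom_pt {Sg La A} M : rename.
Arguments pint {Sg La A} M P _ : rename.
Arguments fint {Sg La A} M f _ : rename.

Definition asbool (P : Prop) : bool :=
  if excluded_middle_informative P then true else false.

(* meet / join of the image of f : D -> L (L finite, so these exist) *)
Definition lbot Sg (A : Llattice Sg) : car A := \big[lmeet/ltop]_(l : car A) l.
Definition inf_img Sg (A : Llattice Sg) (D : Type) (f : D -> car A) : car A :=
  \big[lmeet/ltop]_(l : car A | asbool (exists d, f d = l)) l.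
Definition sup_img Sg (A : Llattice Sg) (D : Type) (f : D -> car A) : car A :=
  \big[ljoin/lbot A]_(l : car A | asbool (exists d, f d = l)) l.

Definition upd (D : Type) (v : nat -> D) (x : nat) (a : D) : nat -> D :=
  fun y => if y == x then a else v y.

Fixpoint teval Sg La (A : Llattice Sg) (M : structure La A) (v : nat -> dom M)
  (t : term La) {struct t} : dom M :=
  match t with
  | TVar x => v x
  | TFun f ts => fint M f (fun i => teval v (ts i))
  end.

Fixpoint feval Sg La (A : Llattice Sg) (M : structure La A) (v : nat -> dom M)
  (phi : formula Sg La) {struct phi} : car A :=
  match phi with
  | FAtom P ts => pint M P (fun i => teval v (ts i))
  | FOr a b => ljoin (feval v a) (feval v b)
  | FAnd a b => lmeet (feval v a) (feval v b)
  | FImp a b => limp (feval v a) (feval v b)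
  | FX c fs => lxop (fun i => feval v (fs i))
  | FAll x a => inf_img (fun d : dom M => feval (upd v x d) a)
  | FEx x a => sup_img (fun d : dom M => feval (upd v x d) a)
  end.

Definition valid1 Sg La (A : Llattice Sg) (phi : formula Sg La) : Prop :=
  forall (M : structure La A) (v : nat -> dom M), feval v phi = ltop.

Fixpoint tfree La (x : nat) (t : term La) : Prop :=
  match t with
  | TVar y => y = x
  | TFun f ts => exists i, tfree x (ts i)
  end.

Fixpoint ffree Sg La (x : nat) (phi : formula Sg La) : Prop :=
  match phi with
  | FAtom P ts => exists i, tfree x (ts i)
  | FOr a b | FAnd a b | FImp a b => ffree x a \/ ffree x b
  | FX c fs => exists i, ffree x (fs i)
  | FAll y a | FEx y a => y <> x /\ ffree x a
  end.

Definition closed_term La (t : term La) : Prop := forall x, ~ tfree x t.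
Definition sentence Sg La (phi : formula Sg La) : Prop := forall x, ~ ffree x phi.

(* Polarity: [only_weak pos phi] says every quantifier occurrence in    *)
(* phi (an occurrence of polarity [pos], true = positive) is weak,      *)
(* i.e. a positive exists or a negative forall.                         *)
Fixpoint only_weak Sg La (pos : bool) (phi : formula Sg La) : Prop :=
  match phi with
  | FAtom _ _ => True
  | FOr a b | FAnd a b => only_weak pos a /\ only_weak pos b
  | FImp a b => only_weak (~~ pos) a /\ only_weak pos b
  | FX c fs => forall i, only_weak (if xpol i then pos else ~~ pos) (fs i)
  | FAll _ a => pos = false /\ only_weak pos a
  | FEx _ a => pos = true /\ only_weak pos a
  end.

(* Substitution (only used with closed terms s, so no capture) and     *)
(* expansions.                                                          *)
Fixpoint tsubst La (x : nat) (s : term La) (t : term La) : term La :=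
  match t with
  | TVar y => if y == x then s else TVar y
  | TFun f ts => TFun f (fun i => tsubst x s (ts i))
  end.

Fixpoint fsubst Sg La (x : nat) (s : term La) (phi : formula Sg La) : formula Sg La :=
  match phi with
  | FAtom P ts => FAtom P (fun i => tsubst x s (ts i))
  | FOr a b => FOr (fsubst x s a) (fsubst x s b)
  | FAnd a b => FAnd (fsubst x s a) (fsubst x s b)
  | FImp a b => FImp (fsubst x s a) (fsubst x s b)
  | FX c fs => FX c (fun i => fsubst x s (fs i))
  | FAll y a => if y == x then FAll y a else FAll y (fsubst x s a)
  | FEx y a => if y == x then FEx y a else FEx y (fsubst x s a)
  end.

(* bigOr F k = F 0 \/ F 1 \/ ... \/ F k   (k+1 disjuncts), same for bigAnd *)
Fixpoint bigOr Sg La (F : nat -> formula Sg La) (k : nat) : formula Sg La :=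
  match k with 0 => F 0 | k'.+1 => FOr (bigOr F k') (F k'.+1) end.
Fixpoint bigAnd Sg La (F : nat -> formula Sg La) (k : nat) : formula Sg La :=
  match k with 0 => F 0 | k'.+1 => FAnd (bigAnd F k') (F k'.+1) end.

(* The n-th expansion E_n (meaningful for n >= 1), with respect to the
   enumeration t_1, t_2, ... given as t 0, t 1, ...: inside out, every
   exists x A(x) becomes A(t_1) \/ ... \/ A(t_n) and every forall x A(x)
   becomes A(t_1) /\ ... /\ A(t_n). *)
Fixpoint expansion Sg La (t : nat -> term La) (n : nat) (phi : formula Sg La)
  : formula Sg La :=
  match phi with
  | FAtom P ts => FAtom P ts
  | FOr a b => FOr (expansion t n a) (expansion t n b)
  | FAnd a b => FAnd (expansion t n a) (expansion t n b)
  | FImp a b => FImp (expansion t n a) (expansion t n b)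
  | FX c fs => FX c (fun i => expansion t n (fs i))
  | FAll x a => bigAnd (fun i => fsubst x (t i) (expansion t n a)) n.-1
  | FEx x a => bigOr (fun i => fsubst x (t i) (expansion t n a)) n.-1
  end.

From HB Require Import structures.
From mathcomp Require Import all_boot.
From Stdlib Require Import ClassicalEpsilon FunctionalExtensionality ProofIrrelevance Classical.
From Stdlib Require List.
Set Implicit Arguments. Unset Strict Implicit. Unset Printing Implicit Defensive.

(* Replacing a weak quantifier occurrence by finitely many of its instances
   can only move the value of a formula down (in the order given by the
   polarity of the occurrence), and more instances move it less; so a valid
   expansion makes E valid. Conversely, if every expansion E_(n+1) has a
   countermodel M_n, a compactness argument (the truth values form a finite
   lattice) yields one interpretation of the closed atoms that agrees, on the
   atoms of each E_n, with some M_m, m >= n. In the resulting Herbrand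
   structure every element is some t_i, so each weak quantifier of E is
   eventually witnessed and E has the value of some E_N there, namely 1; hence
   E_N, and then E_(m+1), is true in M_m. *)

Section LatticeFacts.
Variables (Sg : signature) (A : Llattice Sg).
Implicit Types a b c : car A.

Lemma ljoin_mono a a' b b' : le a a' -> le b b' -> le (ljoin a b) (ljoin a' b').
Proof.
move=> aa' bb'; apply: ljoin_lub.
- exact: le_trans aa' (ljoin_ubl _ _).
- exact: le_trans bb' (ljoin_ubr _ _).
Qed.

Lemma lmeet_mono a a' b b' : le a a' -> le b b' -> le (lmeet a b) (lmeet a' b').
Proof.
move=> aa' bb'; apply: lmeet_glb.
- exact: le_trans (lmeet_lbl _ _) aa'.
- exact: le_trans (lmeet_lbr _ _) bb'.
Qed.

Lemma le_top_eq a : le ltop a -> a = ltop.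
Proof. by move=> topa; apply: le_anti (ltop_max _) topa. Qed.

Lemma le_big_ljoin (I : eqType) (r : seq I) (P : pred I) (F : I -> car A) idx i :
  i \in r -> P i -> le (F i) (\big[ljoin/idx]_(j <- r | P j) F j).
Proof.
elim: r => [|x r IH] //; rewrite in_cons big_cons => /orP [/eqP <-|ir] Pi.
  by rewrite Pi; apply: ljoin_ubl.
case: (P x); last exact: IH.
exact: le_trans (IH ir Pi) (ljoin_ubr _ _).
Qed.

Lemma big_lmeet_le (I : eqType) (r : seq I) (P : pred I) (F : I -> car A) idx i :
  i \in r -> P i -> le (\big[lmeet/idx]_(j <- r | P j) F j) (F i).
Proof.
elim: r => [|x r IH] //; rewrite in_cons big_cons => /orP [/eqP <-|ir] Pi.
  by rewrite Pi; apply: lmeet_lbl.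
case: (P x); last exact: IH.
exact: le_trans (lmeet_lbr _ _) (IH ir Pi).
Qed.

Lemma lbot_min c : le (lbot A) c.
Proof. by apply: (big_lmeet_le (fun l => l)); first exact: mem_index_enum. Qed.

Lemma asboolP (P : Prop) : asbool P <-> P.
Proof. by rewrite /asbool; case: excluded_middle_informative. Qed.

Lemma le_sup_img (D : Type) (f : D -> car A) d : le (f d) (sup_img f).
Proof.
apply: (le_big_ljoin (fun l => l)); first exact: mem_index_enum.
by apply/asboolP; exists d.
Qed.

Lemma sup_img_le (D : Type) (f : D -> car A) c :
  (forall d, le (f d) c) -> le (sup_img f) c.
Proof.
move=> fc; apply: (big_ind (fun x => le x c)).
- exact: lbot_min.
- by move=> x y; apply: ljoin_lub.
- by move=> l /asboolP [d <-].
Qed.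

Lemma inf_img_le (D : Type) (f : D -> car A) d : le (inf_img f) (f d).
Proof.
apply: (big_lmeet_le (fun l => l)); first exact: mem_index_enum.
by apply/asboolP; exists d.
Qed.

Lemma le_inf_img (D : Type) (f : D -> car A) c :
  (forall d, le c (f d)) -> le c (inf_img f).
Proof.
move=> cf; apply: (big_ind (fun x => le c x)).
- exact: ltop_max.
- by move=> x y; apply: lmeet_glb.
- by move=> l /asboolP [d <-].
Qed.

Definition le_pol (pos : bool) a b := if pos then le a b else le b a.

Lemma le_pol_refl pos a : le_pol pos a a.
Proof. by case: pos; apply: le_refl. Qed.

Lemma le_pol_join pos a a' b b' :
  le_pol pos a a' -> le_pol pos b b' -> le_pol pos (ljoin a b) (ljoin a' b').
Proof. by case: pos; apply: ljoin_mono. Qed.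

Lemma le_pol_meet pos a a' b b' :
  le_pol pos a a' -> le_pol pos b b' -> le_pol pos (lmeet a b) (lmeet a' b').
Proof. by case: pos; apply: lmeet_mono. Qed.

Lemma le_pol_imp pos a a' b b' :
  le_pol (~~ pos) a a' -> le_pol pos b b' -> le_pol pos (limp a b) (limp a' b').
Proof. by case: pos; apply: limp_mono. Qed.

Lemma le_pol_xop pos (c : xconn Sg) (f g : 'I_(xarity c) -> car A) :
  (forall i, le_pol (if xpol i then pos else ~~ pos) (f i) (g i)) ->
  le_pol pos (lxop f) (lxop g).
Proof. by case: pos => fg; apply: lxop_mono => i; have := fg i; case: (xpol i). Qed.

End LatticeFacts.

Section Semantics.
Variables (Sg : signature) (A : Llattice Sg) (La : language) (M : structure La A).
Implicit Types (v : nat -> dom M) (phi : formula Sg La) (F G : nat -> formula Sg La).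

Lemma le_bigOr v F k i : i <= k -> le (feval v (F i)) (feval v (bigOr F k)).
Proof.
elim: k => [|k IH] /=; first by rewrite leqn0 => /eqP ->; apply: le_refl.
rewrite leq_eqVlt => /orP [/eqP ->|]; first exact: ljoin_ubr.
by rewrite ltnS => /IH ik; apply: le_trans ik (ljoin_ubl _ _).
Qed.

Lemma bigOr_le v F k c :
  (forall i, i <= k -> le (feval v (F i)) c) -> le (feval v (bigOr F k)) c.
Proof.
elim: k => [|k IH] Fc /=; first exact: Fc.
by apply: ljoin_lub; [apply: IH => i ik; apply: Fc; apply: leqW | apply: Fc].
Qed.

Lemma bigAnd_le v F k i : i <= k -> le (feval v (bigAnd F k)) (feval v (F i)).
Proof.
elim: k => [|k IH] /=; first by rewrite leqn0 => /eqP ->; apply: le_refl.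
rewrite leq_eqVlt => /orP [/eqP ->|]; first exact: lmeet_lbr.
by rewrite ltnS => /IH ik; apply: le_trans (lmeet_lbl _ _) ik.
Qed.

Lemma le_bigAnd v F k c :
  (forall i, i <= k -> le c (feval v (F i))) -> le c (feval v (bigAnd F k)).
Proof.
elim: k => [|k IH] cF /=; first exact: cF.
by apply: lmeet_glb; [apply: IH => i ik; apply: cF; apply: leqW | apply: cF].
Qed.

Lemma bigOr_mono v F G k k' : k <= k' ->
  (forall i, le (feval v (F i)) (feval v (G i))) ->
  le (feval v (bigOr F k)) (feval v (bigOr G k')).
Proof.
move=> kk' FG; apply: bigOr_le => i ik.
exact: le_trans (FG i) (le_bigOr _ _ (leq_trans ik kk')).
Qed.

Lemma bigAnd_mono v F G k k' : k <= k' ->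
  (forall i, le (feval v (G i)) (feval v (F i))) ->
  le (feval v (bigAnd G k')) (feval v (bigAnd F k)).
Proof.
move=> kk' GF; apply: le_bigAnd => i ik.
exact: le_trans (bigAnd_le _ _ (leq_trans ik kk')) (GF i).
Qed.

Lemma teval_closed v v' (s : term La) : closed_term s -> teval v s = teval v' s.
Proof.
elim: s => [y|f ts IH] /= cs; first by case: (cs y).
congr (fint M f); apply: functional_extensionality => i.
by apply: IH => x xi; apply: (cs x); exists i.
Qed.

Lemma teval_tsubst v x (s u : term La) :
  teval v (tsubst x s u) = teval (upd v x (teval v s)) u.
Proof.
elim: u => [y|f ts IH] /=; first by rewrite /upd; case: eqP.
by congr (fint M f); apply: functional_extensionality => i.
Qed.

Lemma upd_upd v x d e : upd (upd v x d) x e = upd v x e.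
Proof. by apply: functional_extensionality => y; rewrite /upd; case: eqP. Qed.

Lemma upd_comm v x y d e : x <> y -> upd (upd v x d) y e = upd (upd v y e) x d.
Proof.
move=> xy; apply: functional_extensionality => z; rewrite /upd.
by case: (z =P x) => [->|]; case: eqP => // yx; case: xy.
Qed.

Lemma feval_fsubst phi v x (s : term La) : closed_term s ->
  feval v (fsubst x s phi) = feval (upd v x (teval v s)) phi.
Proof.
move=> cs; elim: phi v => [P ts|a IHa b IHb|a IHa b IHb|a IHa b IHb|c fs IH|y a IH|y a IH] v /=.
- by congr (pint M P); apply: functional_extensionality => i; rewrite teval_tsubst.
- by rewrite IHa IHb.
- by rewrite IHa IHb.
- by rewrite IHa IHb.
- by congr lxop; apply: functional_extensionality => i; rewrite IH.
- case: (y =P x) => [->|yx] /=; congr inf_img; apply: functional_extensionality => d.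
    by rewrite upd_upd.
  by rewrite IH (teval_closed (upd v y d) v cs) upd_comm // => xy; apply: yx.
- case: (y =P x) => [->|yx] /=; congr sup_img; apply: functional_extensionality => d.
    by rewrite upd_upd.
  by rewrite IH (teval_closed (upd v y d) v cs) upd_comm // => xy; apply: yx.
Qed.

End Semantics.

Section ExpansionOrder.
Variables (Sg : signature) (A : Llattice Sg) (La : language) (t : nat -> term La).
Hypothesis t_closed : forall i, closed_term (t i).
Variable M : structure La A.

Lemma le_pol_expansion phi pos v n : only_weak pos phi ->
  le_pol pos (feval v (expansion t n phi)) (@feval _ _ _ M v phi).
Proof.
elim: phi pos v => [P ts|a IHa b IHb|a IHa b IHb|a IHa b IHb|c fs IH|y a IH|y a IH]
  pos v /=.
- by move=> _; apply: le_pol_refl.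
- by case=> wa wb; apply: le_pol_join; [apply: IHa | apply: IHb].
- by case=> wa wb; apply: le_pol_meet; [apply: IHa | apply: IHb].
- by case=> wa wb; apply: le_pol_imp; [apply: IHa | apply: IHb].
- by move=> w; apply: le_pol_xop => i; apply: IH.
- case=> -> wa /=; apply: le_bigAnd => i _.
  by rewrite feval_fsubst //; apply: le_trans (inf_img_le _ (teval v (t i))) (IH false _ wa).
- case=> -> wa /=; apply: bigOr_le => i _.
  by rewrite feval_fsubst //; apply: le_trans (IH true _ wa) (le_sup_img _ (teval v (t i))).
Qed.

Lemma le_pol_expansion_mono phi pos v n m : only_weak pos phi -> n <= m ->
  le_pol pos (feval v (expansion t n phi)) (@feval _ _ _ M v (expansion t m phi)).
Proof.
move=> + nm; elim: phi pos v => [P ts|a IHa b IHb|a IHa b IHb|a IHa b IHb|c fs IH|y a IH|y a IH]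
  pos v /=.
- by move=> _; apply: le_pol_refl.
- by case=> wa wb; apply: le_pol_join; [apply: IHa | apply: IHb].
- by case=> wa wb; apply: le_pol_meet; [apply: IHa | apply: IHb].
- by case=> wa wb; apply: le_pol_imp; [apply: IHa | apply: IHb].
- by move=> w; apply: le_pol_xop => i; apply: IH.
- case=> -> wa /=; apply: bigAnd_mono => [|i]; first by rewrite -!subn1 leq_sub2r.
  by rewrite !feval_fsubst //; apply: IH wa.
- case=> -> wa /=; apply: bigOr_mono => [|i]; first by rewrite -!subn1 leq_sub2r.
  by rewrite !feval_fsubst //; apply: IH wa.
Qed.

End ExpansionOrder.

Section Eventually.

Definition eventually (P : nat -> Prop) := exists N, forall n, N <= n -> P n.

Lemma eventually_ge k : eventually (fun n => k <= n).
Proof. by exists k. Qed.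

Lemma eventually_impl (P Q : nat -> Prop) :
  (forall n, P n -> Q n) -> eventually P -> eventually Q.
Proof. by move=> PQ [N PN]; exists N => n Nn; apply/PQ/PN. Qed.

Lemma eventually_and (P Q : nat -> Prop) :
  eventually P -> eventually Q -> eventually (fun n => P n /\ Q n).
Proof.
move=> [NP PN] [NQ QN]; exists (maxn NP NQ) => n.
by rewrite geq_max => /andP [NPn NQn]; split; [apply: PN | apply: QN].
Qed.

Lemma eventually_forall_fin (T : finType) (P : T -> nat -> Prop) :
  (forall x, eventually (P x)) -> eventually (fun n => forall x, P x n).
Proof.
move=> PT; pose N x := proj1_sig (constructive_indefinite_description _ (PT x)).
exists (\max_x N x) => n Nn x.
apply: (proj2_sig (constructive_indefinite_description _ (PT x))).
exact: leq_trans (leq_bigmax x) Nn.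
Qed.

Lemma eventually_forall_fin_valued (D : Type) (L : finType) (f : D -> L)
    (P : L -> nat -> Prop) :
  (forall d, eventually (P (f d))) -> eventually (fun n => forall d, P (f d) n).
Proof.
move=> Pf; apply: (eventually_impl (P := fun n => forall l, (exists d, f d = l) -> P l n)).
  by move=> n Pn d; apply: Pn; exists d.
apply: eventually_forall_fin => l; case: (classic (exists d, f d = l)) => [[d <-]|nfl].
  by apply: eventually_impl (Pf d) => n Pn _.
by exists 0 => n _ fl; case: nfl.
Qed.

End Eventually.

Section GeneratedStructure.
Variables (Sg : signature) (A : Llattice Sg) (La : language) (t : nat -> term La).
Hypothesis t_closed : forall i, closed_term (t i).
Variable M : structure La A.
Hypothesis t_onto : forall d : dom M, exists i, forall v, teval v (t i) = d.

Lemma eventually_expansion_ge phi pos v : only_weak pos phi ->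
  eventually (fun n => le_pol pos (feval v phi) (@feval _ _ _ M v (expansion t n phi))).
Proof.
elim: phi pos v => [P ts|a IHa b IHb|a IHa b IHb|a IHa b IHb|c fs IH|y a IH|y a IH]
  pos v /=.
- by move=> _; exists 0 => n _; apply: le_pol_refl.
- case=> wa wb; apply: eventually_impl (eventually_and (IHa _ v wa) (IHb _ v wb)).
  by move=> n [ha hb]; apply: le_pol_join.
- case=> wa wb; apply: eventually_impl (eventually_and (IHa _ v wa) (IHb _ v wb)).
  by move=> n [ha hb]; apply: le_pol_meet.
- case=> wa wb; apply: eventually_impl (eventually_and (IHa _ v wa) (IHb _ v wb)).
  by move=> n [ha hb]; apply: le_pol_imp.
- move=> w; apply: eventually_impl (eventually_forall_fin (fun i => IH i _ v (w i))).
  by move=> n h; apply: le_pol_xop.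
- case=> -> wa; apply: eventually_impl (eventually_forall_fin_valued
    (f := fun d => feval (upd v y d) a)
    (P := fun l n => le (feval v (expansion t n (FAll y a))) l) _) => [n h|d].
    exact: le_inf_img.
  have [i tid] := t_onto d.
  apply: eventually_impl (eventually_and (eventually_ge i.+1) (IH false _ wa)).
  move=> n [ni ha] /=; apply: le_trans (bigAnd_le _ _ (i := i) _) _.
    by rewrite -subn1 leq_subRL ?add1n // (leq_trans _ ni).
  by rewrite feval_fsubst // tid; exact: ha.
- case=> -> wa; apply: eventually_impl (eventually_forall_fin_valued
    (f := fun d => feval (upd v y d) a)
    (P := fun l n => le l (feval v (expansion t n (FEx y a)))) _) => [n h|d].
    exact: sup_img_le.
  have [i tid] := t_onto d.
  apply: eventually_impl (eventually_and (eventually_ge i.+1) (IH true _ wa)).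
  move=> n [ni ha] /=; apply: le_trans _ (le_bigOr _ _ (i := i) _).
    by rewrite feval_fsubst // tid; exact: ha.
  by rewrite -subn1 leq_subRL ?add1n // (leq_trans _ ni).
Qed.

End GeneratedStructure.

Lemma In_flatten_map (I : eqType) (T : Type) (F : I -> seq T) (r : seq I) i k :
  i \in r -> List.In k (F i) -> List.In k (flatten (map F r)).
Proof.
elim: r => [|x r IH] //=; rewrite in_cons => /orP [/eqP <-|ir] ki; apply: List.in_or_app.
  by left.
by right; apply: IH.
Qed.

Lemma In_flatten_mapP (I T : Type) (F : I -> seq T) (r : seq I) k :
  List.In k (flatten (map F r)) -> exists i, List.In k (F i).
Proof.
elim: r => [|x r IH] //= kxr.
by case: (List.in_app_or _ _ _ kxr) => [kx|/IH //]; exists x.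
Qed.

Section QuantifierFree.
Variables (Sg : signature) (La : language).
Implicit Types (phi : formula Sg La) (F : nat -> formula Sg La).

Fixpoint qfree phi : Prop :=
  match phi with
  | FAtom _ _ => True
  | FOr a b | FAnd a b | FImp a b => qfree a /\ qfree b
  | FX c fs => forall i, qfree (fs i)
  | FAll _ _ | FEx _ _ => False
  end.

Definition atom := {P : psymb La & 'I_(parity P) -> term La}.

Fixpoint atoms phi : seq atom :=
  match phi with
  | FAtom P ts => [:: existT _ P ts]
  | FOr a b | FAnd a b | FImp a b => atoms a ++ atoms b
  | FX c fs => flatten (map (fun i => atoms (fs i)) (enum 'I_(xarity c)))
  | FAll _ _ | FEx _ _ => [::]
  end.

Definition atomval (A : Llattice Sg) (M : structure La A) (v : nat -> dom M)
    (k : atom) : car A :=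
  pint M (projT1 k) (fun i => teval v (projT2 k i)).

Lemma feval_eq_atoms (A : Llattice Sg) (M M' : structure La A)
    (v : nat -> dom M) (v' : nat -> dom M') phi :
  qfree phi -> (forall k, List.In k (atoms phi) -> atomval v k = atomval v' k) ->
  feval v phi = feval v' phi.
Proof.
elim: phi => [P ts|a IHa b IHb|a IHa b IHb|a IHa b IHb|c fs IH|y a IH|y a IH] //= qf vv'.
- exact: (vv' _ (or_introl erefl)).
- by case: qf => qa qb; rewrite IHa ?IHb // => k k_ab; apply: vv'; apply: List.in_or_app; auto.
- by case: qf => qa qb; rewrite IHa ?IHb // => k k_ab; apply: vv'; apply: List.in_or_app; auto.
- by case: qf => qa qb; rewrite IHa ?IHb // => k k_ab; apply: vv'; apply: List.in_or_app; auto.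
- congr lxop; apply: functional_extensionality => i; apply: IH => // k ki.
  by apply: vv'; apply: (In_flatten_map (i := i)); rewrite ?mem_enum.
Qed.

Lemma qfree_fsubst phi x s : qfree phi -> qfree (fsubst x s phi).
Proof.
elim: phi => [P ts|a IHa b IHb|a IHa b IHb|a IHa b IHb|c fs IH|y a IH|y a IH] //=.
- by case=> qa qb; split; auto.
- by case=> qa qb; split; auto.
- by case=> qa qb; split; auto.
- by move=> qf i; apply: IH.
Qed.

Lemma qfree_bigOr F k : (forall i, qfree (F i)) -> qfree (bigOr F k).
Proof. by move=> qF; elim: k => //= k IH. Qed.

Lemma qfree_bigAnd F k : (forall i, qfree (F i)) -> qfree (bigAnd F k).
Proof. by move=> qF; elim: k => //= k IH. Qed.

Lemma qfree_expansion t n phi : qfree (expansion t n phi).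
Proof.
elim: phi => //= [y a IH|y a IH].
- by apply: qfree_bigAnd => i; apply: qfree_fsubst.
- by apply: qfree_bigOr => i; apply: qfree_fsubst.
Qed.

Lemma tfree_tsubst (u s : term La) x y :
  closed_term s -> tfree y (tsubst x s u) -> tfree y u /\ y <> x.
Proof.
move=> cs; elim: u => [z|f ts IH] /=.
  by case: (z =P x) => [_ /cs //|zx /= yz]; subst.
by case=> i /IH [yi yx]; split => //; exists i.
Qed.

Lemma ffree_fsubst phi (s : term La) x y :
  closed_term s -> ffree y (fsubst x s phi) -> ffree y phi /\ y <> x.
Proof.
move=> cs; elim: phi => [P ts|a IHa b IHb|a IHa b IHb|a IHa b IHb|c fs IH|z a IH|z a IH] /=.
- by case=> i /(tfree_tsubst cs) [yi yx]; split => //; exists i.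
- by case=> [/IHa|/IHb] [yab yx]; split; auto.
- by case=> [/IHa|/IHb] [yab yx]; split; auto.
- by case=> [/IHa|/IHb] [yab yx]; split; auto.
- by case=> i /IH [yi yx]; split => //; exists i.
- case: (z =P x) => [->|zx] /= [zy ya]; first by split => // yx; apply: zy.
  by case: (IH ya).
- case: (z =P x) => [->|zx] /= [zy ya]; first by split => // yx; apply: zy.
  by case: (IH ya).
Qed.

Lemma ffree_bigOr F k y : ffree y (bigOr F k) -> exists i, ffree y (F i).
Proof. by elim: k => [|k IH] /=; [exists 0 | case=> [/IH|] //; exists k.+1]. Qed.

Lemma ffree_bigAnd F k y : ffree y (bigAnd F k) -> exists i, ffree y (F i).
Proof. by elim: k => [|k IH] /=; [exists 0 | case=> [/IH|] //; exists k.+1]. Qed.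

Lemma ffree_expansion t n phi y : (forall i, closed_term (t i)) ->
  ffree y (expansion t n phi) -> ffree y phi.
Proof.
move=> tc; elim: phi => [P ts|a IHa b IHb|a IHa b IHb|a IHa b IHb|c fs IH|z a IH|z a IH] //=.
- by case=> [/IHa|/IHb]; auto.
- by case=> [/IHa|/IHb]; auto.
- by case=> [/IHa|/IHb]; auto.
- by case=> i /IH; exists i.
- by case/ffree_bigAnd => i /(ffree_fsubst (tc i)) [/IH ya yz]; split => // zy; apply: yz.
- by case/ffree_bigOr => i /(ffree_fsubst (tc i)) [/IH ya yz]; split => // zy; apply: yz.
Qed.

Lemma sentence_expansion t n phi : (forall i, closed_term (t i)) ->
  sentence phi -> sentence (expansion t n phi).
Proof. by move=> tc sphi y /(ffree_expansion tc) /sphi. Qed.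

Lemma ffree_atoms phi k y :
  List.In k (atoms phi) -> (exists i, tfree y (projT2 k i)) -> ffree y phi.
Proof.
elim: phi k => [P ts|a IHa b IHb|a IHa b IHb|a IHa b IHb|c fs IH|z a IH|z a IH] //= k.
- by case=> // <-.
- by move=> kab; case: (List.in_app_or _ _ _ kab) => [/IHa|/IHb] ab /ab; auto.
- by move=> kab; case: (List.in_app_or _ _ _ kab) => [/IHa|/IHb] ab /ab; auto.
- by move=> kab; case: (List.in_app_or _ _ _ kab) => [/IHa|/IHb] ab /ab; auto.
- by move=> kfs; case: (In_flatten_mapP kfs) => j /IH kj /kj; exists j.
Qed.

End QuantifierFree.

Definition infinitely (I : nat -> Prop) := forall N, exists2 m, N <= m & I m.

Lemma infinitely_pigeonhole (T : finType) (f : nat -> T) (I : nat -> Prop) :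
  infinitely I -> exists y, infinitely (fun m => I m /\ f m = y).
Proof.
move=> Iinf; apply: NNPP => no_y.
have [N hN] : eventually (fun m => forall y, I m -> f m <> y).
  apply: eventually_forall_fin => y; apply: NNPP => not_ev; apply: no_y; exists y => N.
  apply: NNPP => no_m; apply: not_ev; exists N => m Nm Im fmy; apply: no_m; by exists m.
by have [m Nm Im] := Iinf N; apply: (hN m Nm (f m) Im).
Qed.

Lemma In_map_eq (X Y : Type) (f g : X -> Y) (k : seq X) x :
  map f k = map g k -> List.In x k -> f x = g x.
Proof. by elim: k => [|y k IH] //= [fgy fgk] [<- //|]; apply: IH. Qed.

Section FiniteValuedCompactness.
Variables (X : Type) (L : finType) (w : nat -> X -> L) (K : nat -> seq X).

Definition thin (I : nat -> Prop) (k : seq X) : nat -> Prop :=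
  let p := epsilon (inhabits [::])
             (fun p => infinitely (fun m => I m /\ map (w m) k = p)) in
  fun m => I m /\ map (w m) k = p.

Lemma thin_infinitely I k : infinitely I -> infinitely (thin I k).
Proof.
move=> Iinf; apply: (epsilon_spec (inhabits [::])
  (fun p => infinitely (fun m => I m /\ map (w m) k = p))).
have [p hp] := infinitely_pigeonhole (fun m => map_tuple (w m) (in_tuple k)) Iinf.
by exists (val p) => N; have [m Nm [Im <-]] := hp N; exists m.
Qed.

Fixpoint nested n : nat -> Prop :=
  if n is n'.+1 then thin (nested n') (K n') else fun _ => True.

Lemma nested_infinitely n : infinitely (nested n).
Proof. by elim: n => [|n IH] /=; [move=> N; exists N | apply: thin_infinitely]. Qed.

Lemma nested_sub j n m : j <= n -> nested n m -> nested j m.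
Proof.
elim: n => [|n IH]; first by rewrite leqn0 => /eqP ->.
by rewrite leq_eqVlt => /orP [/eqP -> //|]; rewrite ltnS => jn [nm _]; apply: IH jn nm.
Qed.

Lemma nested_agree n m m' x :
  nested n.+1 m -> nested n.+1 m' -> List.In x (K n) -> w m x = w m' x.
Proof. by case=> _ wm [_ wm']; apply: In_map_eq; rewrite wm wm'. Qed.

Definition witness n := epsilon (inhabits 0) (fun m => n <= m /\ nested n.+1 m).

Lemma witnessP n : n <= witness n /\ nested n.+1 (witness n).
Proof.
apply: (epsilon_spec (inhabits 0) (fun m => n <= m /\ nested n.+1 m)).
by have [m nm hm] := nested_infinitely n.+1 n; exists m.
Qed.

Definition limit_val (x : X) : L :=
  w (witness (epsilon (inhabits 0) (fun n => List.In x (K n)))) x.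

Lemma limit_val_agree n x : List.In x (K n) -> limit_val x = w (witness n) x.
Proof.
move=> xn; rewrite /limit_val; set n' := epsilon _ _.
have xn' : List.In x (K n').
  by apply: (epsilon_spec (inhabits 0) (fun n => List.In x (K n))); exists n.
have [_ wN] := witnessP (maxn n n').
transitivity (w (witness (maxn n n')) x).
- apply: nested_agree xn'; first exact: (witnessP n').2.
  by apply: nested_sub wN; rewrite ltnS leq_maxr.
- apply: esym; apply: nested_agree xn; first exact: (witnessP n).2.
  by apply: nested_sub wN; rewrite ltnS leq_maxl.
Qed.

Lemma finite_valued_compactness : exists H : X -> L,
  forall n, exists2 m, n <= m & forall x, List.In x (K n) -> H x = w m x.
Proof.
exists limit_val => n; exists (witness n); first exact: (witnessP n).1.
exact: limit_val_agree.
Qed.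

End FiniteValuedCompactness.

Section HerbrandStructure.
Variables (Sg : signature) (A : Llattice Sg) (La : language).

Definition closed_terms := {s : term La | closed_term s}.

Lemma closed_TFun (f : fsymb La) (ts : 'I_(farity f) -> term La) :
  (forall i, closed_term (ts i)) -> closed_term (TFun f ts).
Proof. by move=> tsc x [i xi]; apply: (tsc i x). Qed.

Definition herbrand (c : closed_terms) (H : atom La -> car A) : structure La A :=
  @Structure Sg La A closed_terms c
    (fun P args => H (existT _ P (fun i => proj1_sig (args i))))
    (fun f args => exist _ (TFun f (fun i => proj1_sig (args i)))
                     (closed_TFun (fun i => proj2_sig (args i)))).

Variables (c : closed_terms) (H : atom La -> car A).
Implicit Type v : nat -> dom (herbrand c H).

Lemma herbrand_teval v s : closed_term s -> proj1_sig (teval v s) = s.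
Proof.
elim: s => [y|f ts IH] /= cs; first by case: (cs y).
congr TFun; apply: functional_extensionality => i; apply: IH.
by move=> x xi; apply: (cs x); exists i.
Qed.

Lemma herbrand_named (t : nat -> term La) :
  (forall s, closed_term s -> exists i, t i = s) ->
  forall d : dom (herbrand c H), exists i, forall v, teval v (t i) = d.
Proof.
move=> t_onto [s cs]; have [i tis] := t_onto s cs; exists i => v.
apply: eq_sig_hprop => [x p q|]; first exact: proof_irrelevance.
by rewrite herbrand_teval tis.
Qed.

Lemma herbrand_atomval v (phi : formula Sg La) k :
  sentence phi -> List.In k (atoms phi) -> atomval v k = H k.
Proof.
case: k => P ts sphi kphi; congr H; congr existT.
apply: functional_extensionality => i; apply: herbrand_teval => y yi.
by apply: (sphi y); apply: (ffree_atoms kphi); exists i.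
Qed.

End HerbrandStructure.

Section HerbrandTheorem.
Variables (Sg : signature) (A : Llattice Sg) (La : language) (t : nat -> term La).
Hypothesis t_closed : forall i, closed_term (t i).
Hypothesis t_onto : forall s : term La, closed_term s -> exists i, t i = s.

Lemma valid_expansion_valid E n :
  only_weak true E -> valid1 A (expansion t n E) -> valid1 A E.
Proof.
move=> wE vEn M v; apply: le_top_eq; rewrite -(vEn M v).
exact: (le_pol_expansion t_closed v n wE).
Qed.

Lemma valid_expansion_exists E : sentence E -> only_weak true E ->
  valid1 A E -> exists n, valid1 A (expansion t n.+1 E).
Proof.
move=> sE wE vE; apply: NNPP => no_n.
have cm n : exists Mv : {M : structure La A & nat -> dom M},
    feval (projT2 Mv) (expansion t n.+1 E) <> ltop.
  apply: NNPP => all_n; apply: no_n; exists n => M v.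
  by apply: NNPP => ne_top; apply: all_n; exists (existT _ M v).
pose Mv n := proj1_sig (constructive_indefinite_description _ (cm n)).
have [H agree] := finite_valued_compactness (fun n => atomval (projT2 (Mv n)))
  (fun n => atoms (expansion t n E)).
pose c : closed_terms La := exist _ (t 0) (@t_closed 0).
pose v0 : nat -> dom (herbrand c H) := fun _ => c.
have [N geN] := eventually_expansion_ge t_closed (herbrand_named t_onto) v0 wE.
have HN : feval v0 (expansion t N E) = ltop.
  by apply: le_top_eq; rewrite -(vE _ v0); apply: geN.
have [m Nm agreeN] := agree N.
have Mm_false : feval (projT2 (Mv m)) (expansion t m.+1 E) <> ltop.
  exact: (proj2_sig (constructive_indefinite_description _ (cm m))).
apply/Mm_false/le_top_eq; rewrite -HN.
have -> : feval v0 (expansion t N E) = feval (projT2 (Mv m)) (expansion t N E).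
  apply: feval_eq_atoms (qfree_expansion _ _ _) _ => k kN.
  by rewrite (herbrand_atomval _ (sentence_expansion (n := N) t_closed sE) kN) agreeN.
exact: (le_pol_expansion_mono t_closed _ wE (leqW Nm)).
Qed.

End HerbrandTheorem.

Theorem mainTheorem16 (Sg : signature) (A : Llattice Sg) (La : language)
  (t : nat -> term La)
  (Hconst : exists f : fsymb La, farity f = 0)
  (Ht_closed : forall i, closed_term (t i))
  (Ht_onto : forall s : term La, closed_term s -> exists i, t i = s)
  (E : formula Sg La) (HE : sentence E) (Hweak : only_weak true E) :
  valid1 A E <-> exists n : nat, 0 < n /\ valid1 A (expansion t n E).
Proof.
(* [Hconst] only guarantees closed terms exist; [t 0] is one already. *)
split.
- by move=> vE; have [n vEn] := valid_expansion_exists Ht_closed Ht_onto HE Hweak vE; exists n.+1.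
- by case=> n [_ vEn] M v; apply: (valid_expansion_valid Ht_closed Hweak vEn).
Qed.
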